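(* Let $F_1(v)=\frac{1-e^{-v}}{v}$ for real $v\ne0$ and $F_1(0)=1$, and for $j\in\mathbb{N}$ let $G_j(v)=\frac{v^j}{1-e^{-v}}$ for $v\ne0$, $G_j(0)=1$ if $j=1$ and $G_j(0)=0$ if $j>1$; let $f_j=G_j^{(j)}$. For $j\in\mathbb{N}$ and $k\ge0$, \[ G_j^{(k)}(v)=\frac{(-1)^k}{F_1^{k+1}(v)}\det M_{k}(v), \] where $M_k(v)=(m_{i,\ell})_{1\le i,\ell\le k+1}$ is the $(k+1)\times(k+1)$ matrix with first column $m_{i,1}=\langle j-1\rangle_{i-1}v^{j-i}$ ($1\le i\le k+1$) and, for $2\le\ell\le k+1$, $m_{i,\ell}=\binom{i-1}{\ell-2}F_1^{(i-\ell+1)}(v)$ if $i\ge \ell-1$ and $m_{i,\ell}=0$ if $i<\ell-1$. That is, the rows are $(\langle j-1\rangle_0 v^{j-1}, F_1, 0,\dots,0)$, $(\langle j-1\rangle_1 v^{j-2}, F_1', F_1,0,\dots,0)$, $\dots$, $(\langle j-1\rangle_k v^{j-k-1}, F_1^{(k)}, \binom{k}{1}F_1^{(k-1)},\dots,\binom{k}{k-1}F_1')$. In particular, $f_j(v)=\frac{(-1)^j}{F_1^{j+1}(v)}\det M_j(v)$ (whose first column is $(\langle j-1\rangle_0v^{j-1},\dots,\langle j-1\rangle_{j-2}v,(j-1)!,0)^T$), $G_j^{(k)}(0)=0$ for $0\le k<j-1$, and $G_j^{(j-1)}(0)=(j-1)!$, $G_j^{(j)}(0)=f_j(0)=\frac{j!}{2}$,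 $G_j^{(j+1)}(0)=f_j'(0)=\frac{(j+1)!}{12}$, $G_j^{(j+2)}(0)=0$.
   Context: $\mathbb{N}=\{1,2,3,\dots\}$. The falling factorial is $\langle x\rangle_n=x(x-1)\cdots(x-n+1)$ for $n\ge1$, $\langle x\rangle_0=1$; note $\langle j-1\rangle_{n}=0$ for integers $n\ge j$, and entries $\langle j-1\rangle_{i-1}v^{j-i}$ with $i-1\ge j$ are understood to be $0$ (also at $v=0$). $F_1$ and $G_j$ are real-analytic on $(-2\pi,2\pi)$ and $F_1$ has no real zeros. *)

From HB Require Import structures.
From mathcomp Require Import all_boot all_order all_algebra.
From mathcomp Require Import all_classical all_reals all_analysis.
Set Implicit Arguments. Unset Strict Implicit. Unset Printing Implicit Defensive.
Import Order.TTheory GRing.Theory Num.Theory.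
Local Open Scope ring_scope.

Definition F1 (R : realType) (v : R) : R :=
  if v == 0 then 1 else (1 - expR (- v)) / v.

Definition G (R : realType) (j : nat) (v : R) : R :=
  if v == 0 then (if j == 1%N then 1 else 0)
  else v ^+ j / (1 - expR (- v)).

Definition fj (R : realType) (j : nat) : R -> R := derive1n j (@G R j).

(* The (k+1)x(k+1) matrix M_k(v) (depending on j), with 0-based indices
   i, l : 'I_(k+1) corresponding to the paper's i+1, l+1.
   First column: <j-1>_i v^(j-1-i)  (the nat falling factorial (j-1)^_i
   vanishes when i >= j, so the truncated exponent is harmless). *)
Definition Mk (R : realType) (j k : nat) (v : R) : 'M[R]_(k.+1) :=
  \matrix_(i < k.+1, l < k.+1)
    if (l == 0 :> nat) then ((j.-1) ^_ i)%:R * v ^+ (j.-1 - i)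
    else if (l.-1 <= i)%N then ('C(i, l.-1))%:R * derive1n (i.+1 - l) (@F1 R) v
    else 0.

From HB Require Import structures.
From mathcomp Require Import all_boot all_order all_algebra.
From mathcomp Require Import all_classical all_reals all_analysis.
From mathcomp Require Import ring lra.
Import Order.TTheory GRing.Theory Num.Theory.
Import numFieldNormedType.Exports.
Local Open Scope classical_set_scope.
Local Open Scope ring_scope.
Set Implicit Arguments.
Unset Strict Implicit.

(* Since F_1 = (1 - e^-v)/v is entire and never vanishes, G_j = v^(j-1)/F_1
   is smooth, and Leibniz's rule applied to G_j F_1 = v^(j-1) gives, for
   i = 0, ..., k, the lower triangular system
     <j-1>_i v^(j-1-i) = sum_(m <= i) binom(i, m) G_j^(m)(v) F_1^(i-m)(v)
   with diagonal F_1(v).  Cramer's rule for the last unknown G_j^(k)(v) is the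
   determinant formula.  At v = 0 one uses instead G_j = v^(j-1) G_1, where
   G_1 = v/(1 - e^-v) generates the Bernoulli numbers; by Leibniz again
   G_j^(j-1+n)(0) = (j-1+n)!/n! B_n, and B_0 = 1, B_1 = 1/2, B_2 = 1/6, B_3 = 0
   give the listed values. *)

Section Smooth.
Variable R : realFieldType.
Implicit Types f g : R -> R.

Lemma derive1D f g : (forall x, derivable f x 1) -> (forall x, derivable g x 1) ->
  derive1 (f + g) = derive1 f + derive1 g.
Proof.
by move=> df dg; apply/funext => x; rewrite derive1E deriveD // -!derive1E.
Qed.

Lemma derive1M f g : (forall x, derivable f x 1) -> (forall x, derivable g x 1) ->
  derive1 (f * g) = derive1 f * g + f * derive1 g.
Proof.
move=> df dg; apply/funext => x; rewrite derive1E deriveM // -!derive1E.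
by rewrite addrC [g x *: _]mulrC.
Qed.

Lemma derive1V f : (forall x, f x != 0) -> (forall x, derivable f x 1) ->
  derive1 (fun x => (f x)^-1) = fun x => - derive1 f x * (f x)^-1 ^+ 2.
Proof.
move=> f0 df; apply/funext => x; rewrite derive1E deriveV // -derive1E.
by rewrite [_ *: _]mulrC mulrN mulNr exprVn.
Qed.

Fixpoint derivable_upto (n : nat) f : Prop :=
  if n is k.+1 then (forall x, derivable f x 1) /\ derivable_upto k (derive1 f)
  else True.

Definition smooth f := forall n, derivable_upto n f.

Lemma derivable_uptoW n f : derivable_upto n.+1 f -> derivable_upto n f.
Proof. by elim: n f => [//|n IH] f /= [df /IH]. Qed.

Lemma derivable_uptoD n f g :
  derivable_upto n f -> derivable_upto n g -> derivable_upto n (f + g).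
Proof.
elim: n f g => [//|n IH] f g /= [df Hf] [dg Hg]; split.
  by move=> x; apply: derivableD.
by rewrite derive1D //; apply: IH.
Qed.

Lemma derivable_uptoN n f : derivable_upto n f -> derivable_upto n (- f).
Proof.
elim: n f => [//|n IH] f /= [df Hf]; split.
  by move=> x; apply: derivableN.
have -> : derive1 (- f) = - derive1 f by apply/funext => x; rewrite derive1N.
exact: IH.
Qed.

Lemma derivable_uptoM n f g :
  derivable_upto n f -> derivable_upto n g -> derivable_upto n (f * g).
Proof.
elim: n f g => [//|n IH] f g Hf Hg.
move: (derivable_uptoW Hf) (derivable_uptoW Hg) => Hf' Hg'.
case: Hf Hg => [df Hf] [dg Hg]; split; first by move=> x; apply: derivableM.
by rewrite derive1M //; apply: derivable_uptoD; apply: IH.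
Qed.

Lemma derivable_uptoV n f : (forall x, f x != 0) ->
  derivable_upto n f -> derivable_upto n (fun x => (f x)^-1).
Proof.
move=> f0; elim: n f f0 => [//|n IH] f f0 Hf.
move: (derivable_uptoW Hf) => /(IH _ f0) Hfinv; case: Hf => df Hf.
split; first by move=> x; apply: derivableV.
rewrite derive1V //.
exact: derivable_uptoM (derivable_uptoN Hf) (derivable_uptoM Hfinv Hfinv).
Qed.

Lemma smooth_derive1 f : smooth f -> smooth (derive1 f).
Proof. by move=> sf n; case: (sf n.+1). Qed.

Lemma smoothP f : smooth f <-> forall n x, derivable (derive1n n f) x 1.
Proof.
split=> [sf n|df n].
  elim: n f sf => [|n IH] f sf x; first by case: (sf 1%N).
  by rewrite derive1Sn; apply: IH; apply: smooth_derive1.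
elim: n f df => [//|n IH] f df /=; split; first exact: (df 0%N).
by apply: IH => k x; rewrite -derive1Sn.
Qed.

Lemma smooth_derivable f x : smooth f -> derivable f x 1.
Proof. by move=> /smoothP/(_ 0%N x). Qed.

Lemma smoothM f g : smooth f -> smooth g -> smooth (f * g).
Proof. by move=> sf sg n; apply: derivable_uptoM. Qed.

Lemma smoothV f : (forall x, f x != 0) -> smooth f -> smooth (fun x => (f x)^-1).
Proof. by move=> f0 sf n; apply: derivable_uptoV. Qed.

Lemma derive1nD k f g : smooth f -> smooth g ->
  derive1n k (f + g) = derive1n k f + derive1n k g.
Proof.
elim: k f g => [//|k IH] f g sf sg.
rewrite !derive1Sn derive1D; try by move=> x; apply: smooth_derivable.
by rewrite IH //; apply: smooth_derive1.
Qed.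

Lemma derive1nM k N f g : smooth f -> smooth g -> (k < N)%N -> forall x,
  derive1n k (f * g) x =
  \sum_(m < N) 'C(k, m)%:R * (derive1n m f x * derive1n (k - m) g x).
Proof.
elim: k N f g => [|k IH] [//|N] f g sf sg kN x.
  rewrite big_ord_recl big1 ?addr0 ?mul1r // => i _.
  by rewrite bin0n mul0r.
rewrite derive1Sn derive1M; try by move=> y; apply: smooth_derivable.
rewrite derive1nD; try by apply: smoothM => //; apply: smooth_derive1.
have kN' := ltnW kN.
rewrite [in LHS]fctE (IH _ _ _ (smooth_derive1 sf) sg kN').
rewrite (IH _ _ _ sf (smooth_derive1 sg) kN').
rewrite [in RHS]big_ord_recl [X in X + _ = _]big_ord_recr /=.
rewrite (bin_small (_ : k < N)%N) // mul0r addr0.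
rewrite [X in _ + X = _]big_ord_recl /= !bin0 !subn0 !mul1r.
rewrite addrCA -derive1Sn -derive1nS; congr (_ + _).
rewrite -big_split /=; apply: eq_bigr => i _.
rewrite /bump leq0n add1n add0n subSS binS natrD mulrDl -!derive1Sn -!derive1nS.
rewrite addrC; congr (_ + _).
have [ik|ki] := ltnP i k; first by rewrite -subSn.
by rewrite bin_small ?mul0r // ltnS.
Qed.

Lemma derive1n_pow p i :
  derive1n i (fun x : R => x ^+ p) = fun x => (p ^_ i)%:R * x ^+ (p - i).
Proof.
elim: i => [|i IH]; first by apply/funext => x; rewrite ffactn0 mul1r subn0.
rewrite derive1nS IH; apply/funext => x.
rewrite derive1Ml ?exp_derive1 ?ffactnSr ?natrM ?subnS ?mulrA //.
exact: exprn_derivable.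
Qed.

Lemma smooth_pow p : smooth (fun x : R => x ^+ p).
Proof.
apply/smoothP => n x; rewrite derive1n_pow.
by apply: derivableM; [exact: derivable_cst | exact: exprn_derivable].
Qed.

(* Only the term m = p of the Leibniz formula survives at 0. *)
Lemma derive1n_pow_mul_at0 p k h : smooth h ->
  derive1n k ((fun x => x ^+ p) * h) 0 = (k ^_ p)%:R * derive1n (k - p) h 0.
Proof.
move=> sh; rewrite (derive1nM (smooth_pow p) sh (ltnSn k)).
under eq_bigr do rewrite derive1n_pow mulrA.
have term0 m : m != p -> (p ^_ m)%:R * 0 ^+ (p - m) = 0 :> R.
  case: ltngtP => // [mp|pm] _; last by rewrite ffact_small ?mul0r.
  by rewrite expr0n subn_eq0 leqNgt mp mulr0.
have [pk|kp] := leqP p k; last first.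
  rewrite ffact_small // mul0r big1 // => m _.
  by rewrite term0 ?mulr0 ?mul0r // neq_ltn (leq_trans (ltn_ord m) kp).
rewrite (bigD1 (Ordinal (pk : p < k.+1)%N)) //= big1 => [|m mp]; last first.
  by rewrite term0 ?mulr0 ?mul0r //; apply: contraNneq mp => /val_inj ->.
by rewrite ffactnn subnn expr0 mulr1 addr0 -natrM bin_ffact.
Qed.

End Smooth.

Section BinomialConvolution.
Variable R : comNzRingType.

Lemma det_add_comb_col0 n (A : 'M[R]_n.+1) (c : 'I_n.+1 -> R) : c ord0 = 0 ->
  \det (\matrix_(i, l) if l == ord0 then A i ord0 + \sum_m c m * A i m else A i l)
  = \det A.
Proof.
move=> c0; pose E : 'M[R]_n.+1 := \matrix_(r, l) ((l == ord0)%:R * c r).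
have -> : \matrix_(i, l) (if l == ord0 then A i ord0 + \sum_m c m * A i m
                          else A i l) = A *m (1%:M + E).
  apply/matrixP => i l; rewrite mulmxDr mulmx1 !mxE.
  rewrite /E; under [in RHS]eq_bigr do rewrite mxE.
  case: eqP => [->|_]; last by rewrite big1 ?addr0 // => r _; rewrite mul0r mulr0.
  by congr (_ + _); apply: eq_bigr => r _; rewrite mul1r mulrC.
rewrite det_mulmx [\det (_ + E)]det_trig.
  rewrite big1 ?mulr1 // => i _; rewrite !mxE eqxx.
  by case: eqP => [->|]; rewrite ?c0 ?mulr0 ?mul0r addr0.
apply/is_trig_mxP => i l il; rewrite !mxE.
have /negbTE -> : i != l by rewrite neq_ltn il.
have /negbTE -> : l != ord0 by apply: contraTneq il => ->; rewrite ltn0.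
by rewrite mul0r addr0.
Qed.

Definition binom_conv_mx k (h F : nat -> R) : 'M[R]_k.+1 :=
  \matrix_(i < k.+1, l < k.+1)
    if l == 0 :> nat then h i
    else if (l.-1 <= i)%N then 'C(i, l.-1)%:R * F (i.+1 - l)%N else 0.

Lemma det_binom_conv_mx_last k (h F : nat -> R) :
  (forall i, (i < k)%N -> h i = 0) ->
  \det (binom_conv_mx k h F) = (-1) ^+ k * h k * F 0 ^+ k.
Proof.
move=> h0; rewrite (expand_det_col _ ord0) big_ord_recr /=.
rewrite big1 ?add0r => [|i _]; last by rewrite mxE /= h0 ?mul0r.
rewrite mxE /= /cofactor addn0 mulrCA mulrA; congr (_ * _).
rewrite det_trig.
  rewrite (eq_bigr (fun _ => F 0)) ?prodr_const ?card_ord // => i _.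
  by rewrite !mxE !lift0 lift_max /= subSS leqnn binn subnn mul1r.
apply/is_trig_mxP => i l il; rewrite !mxE !lift0 lift_max /=.
by rewrite leqNgt il.
Qed.

Lemma det_binom_conv_mx k (a h F : nat -> R) :
  (forall i, (i <= k)%N ->
     h i = \sum_(m < k.+1) 'C(i, m)%:R * (a m * F (i - m)%N)) ->
  \det (binom_conv_mx k h F) = (-1) ^+ k * (a k * F 0) * F 0 ^+ k.
Proof.
(* Subtracting a_m times column m+1 from column 0 leaves there
   C(i, k) a_k F(i - k), which vanishes above the last row. *)
move=> hE; pose c (m : 'I_k.+1) := if m == 0 :> nat then 0 else - a m.-1.
pose h' i := 'C(i, k)%:R * (a k * F (i - k)%N).
transitivity (\det (binom_conv_mx k h' F)); last first.
  rewrite det_binom_conv_mx_last => [|i ik]; last by rewrite /h' bin_small ?mul0r.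
  by rewrite /h' binn subnn mul1r.
rewrite -(@det_add_comb_col0 _ _ c) //; congr (\det _).
apply/matrixP => i l; rewrite !mxE.
have [->|] := eqVneq l ord0; last by rewrite -val_eqE => /negbTE ->.
rewrite [X in X + _ = _]/= [RHS]/= (hE _ (ltn_ord i)).
rewrite [X in X + _ = _]big_ord_recr [X in _ + X = _]big_ord_recl /=.
rewrite [c ord0]/c mul0r add0r addrAC -big_split big1 ?add0r // => m _.
rewrite /c mxE !lift0 /= subSS; case: leqP => [mi|im]; first by ring.
by rewrite bin_small // mul0r mulr0 addr0.
Qed.

End BinomialConvolution.

Lemma binom_conv_cramer (R : fieldType) k (a h F : nat -> R) : F 0 != 0 ->
  (forall i, (i <= k)%N ->
     h i = \sum_(m < k.+1) 'C(i, m)%:R * (a m * F (i - m)%N)) ->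
  a k = (-1) ^+ k / F 0 ^+ k.+1 * \det (binom_conv_mx k h F).
Proof.
move=> F0 /det_binom_conv_mx ->.
have sign2 : (-1) ^+ k * (-1) ^+ k = 1 :> R.
  by rewrite -exprD -signr_odd oddD addbb.
rewrite [RHS](_ : _ = (-1) ^+ k * (-1) ^+ k * a k * (F 0 ^+ k.+1 / F 0 ^+ k.+1)).
  by rewrite sign2 mul1r divff ?mulr1 // expf_neq0.
by rewrite exprS; ring.
Qed.

Section F1_derivatives.
Variable R : realType.

(* F1 v = \sum_n (-v)^n / (n+1)!, so these are the Taylor coefficients of the
   m-th derivative of F1. *)
Definition F1_deriv_coef (m n : nat) : R :=
  (-1) ^+ (n + m) / (n`!%:R * (n + m).+1%:R).

Definition F1_deriv (m : nat) (x : R) : R := limn (pseries (F1_deriv_coef m) x).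

Lemma pseries_diffs_F1_deriv_coef m :
  pseries_diffs (F1_deriv_coef m) = F1_deriv_coef m.+1.
Proof.
apply/funext => n; rewrite /pseries_diffs /F1_deriv_coef addSn addnS factS natrM.
have n0 := ler0n R n; have m0 := ler0n R m.
by field; rewrite pnatr_eq0 -lt0n fact_gt0; apply/and3P; split => //;
  apply/negP => /eqP; lra.
Qed.

Lemma is_cvg_pseries_F1_deriv_coef m x : cvgn (pseries (F1_deriv_coef m) x).
Proof.
apply: normed_cvg; apply: (series_le_cvg _ _ _ (is_cvg_series_exp_coeff `|x|)).
- by move=> n; apply: normr_ge0.
- by move=> n; apply: exp_coeff_ge0.
move=> n; rewrite /exp_coeff /F1_deriv_coef /= normrM normrX normrM normfV.
rewrite normrX normrN normr1 expr1n mul1r [`|_ * _|]ger0_norm // invfM mulrAC.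
by rewrite [_^-1 * _]mulrC ler_piMr ?divr_ge0 // invf_le1 // ler1n.
Qed.

Lemma is_derive_F1_deriv m (x : R) :
  is_derive x (1 : R) (F1_deriv m) (F1_deriv m.+1 x).
Proof.
rewrite /F1_deriv -pseries_diffs_F1_deriv_coef.
apply: (@pseries_snd_diffs _ _ (`|x| + 1));
  rewrite ?pseries_diffs_F1_deriv_coef; try exact: is_cvg_pseries_F1_deriv_coef.
by rewrite [X in _ < X]ger0_norm ?addr_ge0 // ltrDl.
Qed.

Lemma F1_deriv_at0 m : F1_deriv m 0 = (-1) ^+ m / m.+1%:R.
Proof.
rewrite /F1_deriv -[RHS](_ : F1_deriv_coef m 0 = _); last first.
  by rewrite /F1_deriv_coef fact0 mul1r.
apply: lim_near_cst => //; near=> k; rewrite -[k]prednK; last by near: k.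
rewrite /pseries /series /= big_nat_recl // expr0 mulr1 big1 ?addr0 // => i _.
by rewrite expr0n mulr0.
Unshelve. all: by end_near. Qed.

Lemma expRN_F1_deriv v : expR (- v) = 1 - v * F1_deriv 0 v.
Proof.
suff : series (exp_coeff (- v)) @ \oo --> 1 - v * F1_deriv 0 v by exact: cvg_lim.
rewrite -cvg_shiftS.
suff -> : (fun n => series (exp_coeff (- v)) n.+1) =
          (fun n => 1 - v * pseries (F1_deriv_coef 0) v n).
  apply: cvgB; first exact: cvg_cst.
  by apply: cvgM; [exact: cvg_cst | exact: is_cvg_pseries_F1_deriv_coef].
apply/funext => n; rewrite /series /= big_nat_recl // /exp_coeff /= expr0.
rewrite fact0 divr1 mulr_sumr -sumrN; congr (_ + _); apply: eq_bigr => i _.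
rewrite /F1_deriv_coef /= addn0 exprS (exprNn v) factS natrM -natr1.
by field; rewrite natr1 !pnatr_eq0 -!lt0n fact_gt0.
Qed.

Lemma F1E : @F1 R = F1_deriv 0.
Proof.
apply/funext => v; rewrite /F1; case: eqP => [->|/eqP v0].
  by rewrite F1_deriv_at0 expr0 divr1.
by rewrite expRN_F1_deriv; field.
Qed.

Lemma derive1n_F1 m : derive1n m (@F1 R) = F1_deriv m.
Proof.
elim: m => [|m IH]; first by rewrite F1E.
rewrite derive1nS IH; apply/funext => x.
by rewrite derive1E; case: (is_derive_F1_deriv m x) => _ ->.
Qed.

Lemma F1_neq0 v : @F1 R v != 0.
Proof.
rewrite /F1; have [_|v0] := eqVneq v 0; first exact: oner_neq0.
rewrite mulf_neq0 ?invr_eq0 // subr_eq0 eq_sym -expR0.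
by apply/negP => /eqP/expR_inj/eqP; rewrite oppr_eq0 (negbTE v0).
Qed.

End F1_derivatives.

Section G_derivatives.
Variable R : realType.

Lemma smooth_F1 : smooth (@F1 R).
Proof.
by apply/smoothP => n x; rewrite derive1n_F1; case: (is_derive_F1_deriv n x).
Qed.

Lemma G1E : @G R 1 = fun v => (F1 v)^-1.
Proof.
apply/funext => v; rewrite /G /F1; case: eqP => [_|v0] /=; first by rewrite invr1.
by rewrite invf_div expr1.
Qed.

Lemma G_pow_mul_G1 j : (1 <= j)%N -> @G R j = (fun x => x ^+ j.-1) * G 1.
Proof.
case: j => [//|p] _; rewrite mulrfctE; apply/funext => x; rewrite /G /=.
case: eqP => [->|_]; first by rewrite mulr1 expr0n; case: p.
by rewrite expr1 mulrA -exprSr.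
Qed.

Lemma smooth_G j : (1 <= j)%N -> smooth (@G R j).
Proof.
move=> hj; rewrite G_pow_mul_G1 // G1E.
exact/smoothM/smoothV/smooth_F1/F1_neq0/smooth_pow.
Qed.

Lemma G_mul_F1 j : (1 <= j)%N -> @G R j * @F1 R = fun x => x ^+ j.-1.
Proof.
move=> hj; rewrite G_pow_mul_G1 // G1E !mulrfctE; apply/funext => x.
by rewrite mulfVK // F1_neq0.
Qed.

Lemma G_F1_binom_conv j (hj : (1 <= j)%N) N i (x : R) : (i < N)%N ->
  (j.-1 ^_ i)%:R * x ^+ (j.-1 - i) =
  \sum_(m < N) 'C(i, m)%:R * (derive1n m (G j) x * derive1n (i - m) (@F1 R) x).
Proof.
move=> iN; rewrite -(derive1nM (smooth_G hj) smooth_F1 iN) G_mul_F1 //.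
by rewrite derive1n_pow.
Qed.

Lemma derive1n_G_det j (hj : (1 <= j)%N) k (v : R) :
  derive1n k (@G R j) v = (-1) ^+ k / (F1 v) ^+ k.+1 * \det (Mk j k v).
Proof.
apply: (binom_conv_cramer (a := fun m => derive1n m (G j) v)
  (h := fun i => (j.-1 ^_ i)%:R * v ^+ (j.-1 - i))
  (F := fun n => derive1n n (@F1 R) v)) => [|i ik]; first exact: F1_neq0.
exact: G_F1_binom_conv.
Qed.

(* G_1 generates the Bernoulli numbers: these are B_0, ..., B_3 with B_1 = 1/2. *)
Lemma derive1n_G1_at0 :
  [/\ @G R 1 0 = 1, derive1n 1 (@G R 1) 0 = 2^-1,
      derive1n 2 (@G R 1) 0 = 6^-1 & derive1n 3 (@G R 1) 0 = 0].
Proof.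
set a := fun m => derive1n m (@G R 1) 0.
have rec n : \sum_(m < n.+2) 'C(n.+1, m)%:R *
    (a m * ((-1) ^+ (n.+1 - m) / (n.+1 - m).+1%:R)) = 0.
  have := G_F1_binom_conv (isT : (1 <= 1)%N) (0 : R) (ltnSn n.+1).
  rewrite ffact_small // mul0r => /esym E; rewrite -[RHS]E.
  by apply: eq_bigr => m _; rewrite derive1n_F1 F1_deriv_at0.
have a0 : a 0%N = 1 by rewrite /a /G /= eqxx.
suff : [/\ a 0%N = 1, a 1%N = 2^-1, a 2%N = 6^-1 & a 3%N = 0] by [].
have := rec 0%N; have := rec 1%N; have := rec 2%N.
rewrite !big_ord_recr !big_ord0 /= !subSS ?subn0 ?bin0 ?binn ?bin1 ?binSn.
rewrite !exprS !expr0 a0 => r3 r2 r1; clear rec; clearbody a.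
have a1 : a 1%N = 2^-1 by lra.
have a2 : a 2%N = 6^-1 by rewrite a1 in r2; lra.
by split => //; rewrite a1 a2 in r3; lra.
Qed.

Lemma derive1n_G_at0 j (hj : (1 <= j)%N) k :
  derive1n k (@G R j) 0 = (k ^_ j.-1)%:R * derive1n (k - j.-1) (@G R 1) 0.
Proof.
rewrite G_pow_mul_G1 // derive1n_pow_mul_at0 // G1E.
exact/smoothV/smooth_F1/F1_neq0.
Qed.

End G_derivatives.

Theorem theorem5p1 (R : realType) (j : nat) (hj : (1 <= j)%N) :
  (forall (k : nat) (v : R),
      derive1n k (@G R j) v = (-1) ^+ k / (F1 v) ^+ k.+1 * \det (Mk j k v))
  /\ (forall v : R, @fj R j v = (-1) ^+ j / (F1 v) ^+ j.+1 * \det (Mk j j v))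
  /\ (forall k : nat, (k < j.-1)%N -> derive1n k (@G R j) 0 = 0)
  /\ derive1n j.-1 (@G R j) 0 = (j.-1)`!%:R
  /\ derive1n j (@G R j) 0 = (j`!)%:R / 2
  /\ @fj R j 0 = (j`!)%:R / 2
  /\ derive1n j.+1 (@G R j) 0 = (j.+1)`!%:R / 12
  /\ derive1 (@fj R j) 0 = (j.+1)`!%:R / 12
  /\ derive1n j.+2 (@G R j) 0 = 0.
Proof.
split; first exact: derive1n_G_det.
split; first by move=> v; rewrite /fj derive1n_G_det.
rewrite /fj -derive1nS; case: j hj => // p hp /=.
have at0 k := @derive1n_G_at0 R _ hp k; rewrite /= in at0.
have [G10 G11 G12 G13] := @derive1n_G1_at0 R.
have ffactE n : ((p + n) ^_ p)%:R = (p + n)`!%:R / n`!%:R :> R.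
  by rewrite -(ffact_fact (leq_addr n p)) addKn natrM mulfK.
have Gp : derive1n p (G p.+1) 0 = p`!%:R :> R.
  by rewrite at0 subnn ffactnn [derive1n 0 _]/= G10 mulr1.
have Gp1 : derive1n p.+1 (G p.+1) 0 = (p.+1)`!%:R / 2 :> R.
  by rewrite at0 -[in LHS]addn1 addKn ffactE G11 divr1 addn1.
have Gp2 : derive1n p.+2 (G p.+1) 0 = (p.+2)`!%:R / 12 :> R.
  rewrite at0 -[in LHS]addn2 addKn ffactE G12 addn2 -mulrA -invfM.
  by congr (_ / _); rewrite -natrM.
have Gp3 : derive1n p.+3 (G p.+1) 0 = 0 :> R.
  by rewrite at0 -addn3 addKn G13 mulr0.
by do ![split] => // k kp; rewrite at0 ffact_small ?mul0r.
Qed.
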